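(* Let $n\ge3$ and $r\in[3,n]$. Then: (1) $\mathfrak b_{a_2}\cdot\tilde{\mathfrak b}_r=\prod_{i=1}^r\mathfrak b_{a_i}$; (2) $I_{C_n}=\mathfrak b_{a_2}\cdot\tilde{\mathfrak b}_r\cdot\prod_{i=r+1}^{n+1}\mathfrak b_{a_i}$.
   Context: Let $K$ be a field, $N\ge2$, $R=K[X_1,\dots,X_N]$, $X=X_1$, $Y=X_2$. $[x,y]=\{z\in\mathbb Z:x\le z\le y\}$. For $i\in\mathbb N^+$, $\mathfrak b_i=\langle X^i,Y^i\rangle$. Fix an integer $n\ge 3$ and positive integers $a_1,\dots,a_{n+1}$ with (C1) $a_{n+1}=a_1+\dots+a_{n-1}+2a_n$ and (C2) $a_{i+1}>2(a_1+\dots+a_i)$ for all $i\in[1,n-1]$. For $I\subseteq[1,n+1]$ put $a_I=\sum_{i\in I}a_i$ ($a_\emptyset=0$). $C_n=\{a_I:I\subseteq[1,n+1]\}$, $\mu=a_{[1,n+1]}$, and $I_{C_n}=\langle X^{\mu-c}Y^c:c\in C_n\rangle$. For $r\in[3,n]$, $\tilde{\mathfrak b}_r$ is the ideal generated by $\mathfrak b_{a_1}\mathfrak b_{a_3}\mathfrak b_{a_4}\cdots\mathfrak b_{a_r}$ together with the monomial $X^{a_{[3,r]}-a_2}Y^{a_3-a_2}$. *)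

From HB Require Import structures.
From mathcomp Require Import all_boot all_order all_algebra.
From mathcomp Require Import mpoly.
Set Implicit Arguments. Unset Strict Implicit. Unset Printing Implicit Defensive.
Import GRing.Theory.
Local Open Scope ring_scope.

(* The polynomial ring R = K[X_1,...,X_{N}] with N >= 2 is encoded as
   {mpoly K[N.+2]}; X = X_1 is 'X_0 and Y = X_2 is 'X_1 (0-based indices). *)
Section Ideals.
Variable (K : fieldType) (N : nat).
Local Notation R := {mpoly K[N.+2]}.

Definition ideal_eq (I J : R -> Prop) : Prop := forall p, I p <-> J p.

Definition ideal_gen (S : R -> Prop) : R -> Prop :=
  fun p => exists s : seq (R * R),
    (forall c, c \in s -> S c.2) /\ p = \sum_(c <- s) c.1 * c.2.

Definition ideal_mul (I J : R -> Prop) : R -> Prop :=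
  ideal_gen (fun p => exists a b, I a /\ J b /\ p = a * b).

Definition ideal_one : R -> Prop := ideal_gen (fun p => p = 1).

Definition ideal_prod (l : seq (R -> Prop)) : R -> Prop :=
  foldr ideal_mul ideal_one l.

Definition varX : R := 'X_(@Ordinal N.+2 0 isT).
Definition varY : R := 'X_(@Ordinal N.+2 1 isT).

Definition bideal (i : nat) : R -> Prop :=
  ideal_gen (fun p => p = varX ^+ i \/ p = varY ^+ i).

(* a : nat -> nat, only a_1, ..., a_{n+1} are relevant. *)
Definition asum (a : nat -> nat) (x y : nat) : nat := (\sum_(x <= i < y.+1) a i)%N.

Definition bprod (a : nat -> nat) (x y : nat) : R -> Prop :=
  ideal_prod [seq bideal (a i) | i <- index_iota x y.+1].

Definition btilde (a : nat -> nat) (r : nat) : R -> Prop :=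
  ideal_gen (fun p =>
    ideal_mul (bideal (a 1%N)) (bprod a 3 r) p \/
    p = varX ^+ (asum a 3 r - a 2%N) * varY ^+ (a 3%N - a 2%N)).

(* I_{C_n} = < X^{mu - c} Y^c : c in C_n >, C_n = { a_I : I subset [1,n+1] },
   mu = a_{[1,n+1]}. Subsets I of [1,n+1] are encoded as subsets of 'I_(n+1)
   via i |-> i+1. *)
Definition ICn (a : nat -> nat) (n : nat) : R -> Prop :=
  ideal_gen (fun p => exists c : nat,
    (exists I : {set 'I_n.+1}, c = (\sum_(i in I) a i.+1)%N) /\
    p = varX ^+ (asum a 1 n.+1 - c) * varY ^+ c).

End Ideals.

From HB Require Import structures.
From mathcomp Require Import all_boot all_order all_algebra.
From mathcomp Require Import mpoly.
From mathcomp Require Import zify.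
Set Implicit Arguments. Unset Strict Implicit. Unset Printing Implicit Defensive.
Import GRing.Theory.

(* All ideals involved are monomial ideals in X and Y.  The product of the
   ideals <X^k, Y^k>, k in l, is generated by the X^i Y^j where (i, j) runs over
   the ways of splitting l into two parts and summing each; for
   l = (a_1, ..., a_{n+1}) these are exactly the generators X^{mu - c} Y^c,
   c in C_n, of I_{C_n}, so (2) follows from (1).  For (1), multiplying
   b_{a_2} into the generators of b_{a_1} b_{a_3} ... b_{a_r} gives all the
   generators of b_{a_1} ... b_{a_r}, and since a_3 >= a_1 + 2 a_2 by (C2), the
   products of X^{a_2} and Y^{a_2} with the extra generator
   X^{a_{[3,r]} - a_2} Y^{a_3 - a_2} are multiples of X^{a_{[3,r]}} Y^{a_1 + a_2}
   and of X^{a_1 + a_2 + a_{[4,r]}} Y^{a_3} respectively. *)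

Definition exp_sum (E F : nat -> nat -> Prop) (i j : nat) : Prop :=
  exists i1 j1 i2 j2, [/\ E i1 j1, F i2 j2, i = i1 + i2 & j = j1 + j2].

(* The mask m selects the factors of the product that contribute to the
   exponent of Y. *)
Definition splits (l : seq nat) (i j : nat) : Prop :=
  exists2 m : bitseq, size m = size l &
    i = sumn (mask (map negb m) l) /\ j = sumn (mask m l).

Lemma splits_nil i j : splits [::] i j <-> i = 0 /\ j = 0.
Proof. by split=> [[[] // _ [-> ->]]|[-> ->]]; last exists [::]. Qed.

Lemma splits1 k i j : splits [:: k] i j <-> (i = k /\ j = 0) \/ (i = 0 /\ j = k).
Proof.
split=> [[[|[] []] //= _ [-> ->]]|[[-> ->]|[-> ->]]]; rewrite ?addn0; [by right|by left| |].
  by exists [:: false]; rewrite //= addn0.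
by exists [:: true]; rewrite //= addn0.
Qed.

Lemma splits_cat l1 l2 i j :
  splits (l1 ++ l2) i j <-> exp_sum (splits l1) (splits l2) i j.
Proof.
split=> [[m sz_m [-> ->]]|[i1 [j1 [i2 [j2 [[m1 sz1 [-> ->]] [m2 sz2 [-> ->]] -> ->]]]]]].
  rewrite -(cat_take_drop (size l1) m) map_cat.
  have sz_take : size (take (size l1) m) = size l1.
    by rewrite size_take sz_m size_cat; case: ltnP => //; lia.
  rewrite !mask_cat ?size_map // !sumn_cat.
  do 4 eexists; split; [exists (take (size l1) m)|exists (drop (size l1) m)| |] => //.
  by rewrite size_drop sz_m size_cat addKn.
exists (m1 ++ m2); first by rewrite !size_cat sz1 sz2.
by rewrite map_cat !mask_cat ?size_map // !sumn_cat.
Qed.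

Lemma splits_swap x y l i j : splits [:: x, y & l] i j -> splits [:: y, x & l] i j.
Proof.
move=> [[|b1 [|b2 m]] //= [sz_m] [-> ->]].
exists [:: b2, b1 & m]; first by rewrite /= sz_m.
by case: b1; case: b2 => /=; split; lia.
Qed.

Lemma splits_consX k l i j : splits l i j -> splits (k :: l) (k + i) j.
Proof. by move=> [m sz_m [-> ->]]; exists (false :: m); rewrite /= ?sz_m. Qed.

Lemma splits_consY k l i j : splits l i j -> splits (k :: l) i (k + j).
Proof. by move=> [m sz_m [-> ->]]; exists (true :: m); rewrite /= ?sz_m. Qed.

Lemma splits_sumnX l : splits l (sumn l) 0.
Proof.
exists (nseq (size l) false); first by rewrite size_nseq.
by rewrite map_nseq mask_true ?mask_false.
Qed.

Lemma sumn_mask_negb m l :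
  size m = size l -> sumn (mask m l) + sumn (mask (map negb m) l) = sumn l.
Proof. by elim: l m => [|k l IHl] [|[] m] //= [/IHl]; lia. Qed.

Lemma sumn_mask_mkseq f n m :
  sumn (mask m (mkseq f n)) = \sum_(k < n | nth false m k) f k.
Proof.
rewrite sumnE big_mask (eq_bigr (fun i : 'I__ => nth 0 (mkseq f n) i)) => [|i _].
  rewrite -(big_mkord (fun i => nth false m i && true)) size_mkseq big_mkord.
  by apply: eq_big => [i|i _]; rewrite ?andbT ?nth_mkseq.
by rewrite (tnth_nth 0).
Qed.

Lemma splits_mkseqP f n i j :
  splits (mkseq f n) i j <->
  exists2 I : {set 'I_n}, j = \sum_(k in I) f k & i = \sum_(k < n) f k - j.
Proof.
have sum_mkseq : sumn (mkseq f n) = \sum_(k < n) f k.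
  rewrite -{1}(mask_true (leqnn (size (mkseq f n)))) size_mkseq sumn_mask_mkseq.
  by apply: eq_bigl => k; rewrite nth_nseq ltn_ord.
split=> [[m sz_m [-> ->]]|[I -> ->]].
  exists [set k : 'I_n | nth false m k].
    by rewrite sumn_mask_mkseq; apply: eq_bigl => k; rewrite inE.
  by rewrite -sum_mkseq -(sumn_mask_negb sz_m) addKn.
pose m := mkseq (fun k => k \in [seq val x | x <- enum I]) n.
have sz_m : size m = size (mkseq f n) by rewrite !size_mkseq.
have sumI : \sum_(k in I) f k = sumn (mask m (mkseq f n)).
  rewrite sumn_mask_mkseq; apply: eq_bigl => k.
  by rewrite nth_mkseq // (mem_map val_inj) mem_enum.
by exists m; rewrite // sumI -sum_mkseq -(sumn_mask_negb sz_m) addKn.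
Qed.

Section Ideals.
Variables (K : fieldType) (N : nat).
Local Notation R := {mpoly K[N.+2]}.
Local Open Scope ring_scope.

Definition is_ideal (J : R -> Prop) : Prop :=
  [/\ J 0, (forall x y, J x -> J y -> J (x + y)) & (forall c x, J x -> J (c * x))].

Lemma ideal_gen_is_ideal (S : R -> Prop) : is_ideal (ideal_gen S).
Proof.
split; first by exists [::]; rewrite big_nil.
- move=> _ _ [s1 [S1 ->]] [s2 [S2 ->]]; exists (s1 ++ s2); rewrite big_cat.
  by split=> // c; rewrite mem_cat => /orP[/S1|/S2].
- move=> c _ [s [Ss ->]]; exists [seq (c * q.1, q.2) | q <- s]; split.
    by move=> _ /mapP[q /Ss Sq ->].
  by rewrite big_map mulr_sumr; apply: eq_bigr => q _; rewrite mulrA.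
Qed.

Lemma mem_ideal_gen (S : R -> Prop) x : S x -> ideal_gen S x.
Proof.
move=> Sx; exists [:: (1, x)]; split; first by move=> c; rewrite inE => /eqP->.
by rewrite big_seq1 mul1r.
Qed.

Lemma ideal_gen_min (S J : R -> Prop) :
  is_ideal J -> (forall x, S x -> J x) -> forall x, ideal_gen S x -> J x.
Proof.
move=> [J0 JD JM] SJ _ [s [Ss ->]]; elim: s Ss => [|c s IHs] Ss; first by rewrite big_nil.
rewrite big_cons; apply: JD; first by apply/JM/SJ/Ss; rewrite inE eqxx.
by apply: IHs => q sq; apply: Ss; rewrite inE sq orbT.
Qed.

Lemma ideal_gen_subset (S T : R -> Prop) :
  (forall x, S x -> ideal_gen T x) -> forall x, ideal_gen S x -> ideal_gen T x.
Proof. exact: ideal_gen_min (ideal_gen_is_ideal T). Qed.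

Lemma ideal_eq_sym (I J : R -> Prop) : ideal_eq I J -> ideal_eq J I.
Proof. by move=> IJ p; split=> /IJ. Qed.

Lemma ideal_eq_trans (I J L : R -> Prop) :
  ideal_eq I J -> ideal_eq J L -> ideal_eq I L.
Proof. by move=> IJ JL p; split=> [/IJ/JL|/JL/IJ]. Qed.

Lemma ideal_gen_eq (S T : R -> Prop) :
  (forall x, S x -> ideal_gen T x) -> (forall x, T x -> ideal_gen S x) ->
  ideal_eq (ideal_gen S) (ideal_gen T).
Proof. by move=> ST TS p; split; apply: ideal_gen_subset. Qed.

Lemma ideal_gen_ext (S T : R -> Prop) :
  (forall x, S x <-> T x) -> ideal_eq (ideal_gen S) (ideal_gen T).
Proof. by move=> ST; apply: ideal_gen_eq => x /ST; apply: mem_ideal_gen. Qed.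

Lemma ideal_mul_eq (I I' J J' : R -> Prop) :
  ideal_eq I I' -> ideal_eq J J' -> ideal_eq (ideal_mul I J) (ideal_mul I' J').
Proof.
move=> II' JJ'; apply: ideal_gen_ext => p.
by split=> -[x [y [/II' Ix [/JJ' Jy ->]]]]; exists x, y.
Qed.

Lemma is_ideal_mulr (J : R -> Prop) y : is_ideal J -> is_ideal (fun x => J (x * y)).
Proof.
move=> [J0 JD JM]; split; first by rewrite mul0r.
- by move=> x z Jx Jz; rewrite mulrDl; apply: JD.
- by move=> c x Jx; rewrite -mulrA; apply: JM.
Qed.

Lemma ideal_mul_gen (S T : R -> Prop) :
  ideal_eq (ideal_mul (ideal_gen S) (ideal_gen T))
    (ideal_gen (fun p => exists s t, S s /\ T t /\ p = s * t)).
Proof.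
pose ST := ideal_gen (fun p => exists s t, S s /\ T t /\ p = s * t).
have idST : is_ideal ST := ideal_gen_is_ideal _.
apply: ideal_gen_eq => _ [x [y [Sx [Ty ->]]]]; last first.
  by apply: mem_ideal_gen; exists x, y; do !split; apply: mem_ideal_gen.
suff SyST s : S s -> ST (s * y) by exact: ideal_gen_min (is_ideal_mulr y idST) SyST _ Sx.
move=> Ss; rewrite mulrC.
suff TsST t : T t -> ST (t * s) by exact: ideal_gen_min (is_ideal_mulr s idST) TsST _ Ty.
by move=> Tt; rewrite mulrC; apply: mem_ideal_gen; exists s, t.
Qed.

Lemma ideal_genUl (I : R -> Prop) (S T : R -> Prop) : ideal_eq I (ideal_gen S) ->
  ideal_eq (ideal_gen (fun p => I p \/ T p)) (ideal_gen (fun p => S p \/ T p)).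
Proof.
move=> IS; apply: ideal_gen_eq => x [Sx|Tx]; try by apply: mem_ideal_gen; right.
  by move/IS: Sx; apply: ideal_gen_subset => y Sy; apply: mem_ideal_gen; left.
by apply: mem_ideal_gen; left; apply/IS/mem_ideal_gen.
Qed.

Definition mon (i j : nat) : R := varX K N ^+ i * varY K N ^+ j.

Definition monomial_ideal (E : nat -> nat -> Prop) : R -> Prop :=
  ideal_gen (fun p => exists i j, E i j /\ p = mon i j).

Lemma monM i1 j1 i2 j2 : mon i1 j1 * mon i2 j2 = mon (i1 + i2) (j1 + j2).
Proof. by rewrite /mon !exprD mulrACA. Qed.

Lemma monomial_ideal_ext (E F : nat -> nat -> Prop) :
  (forall i j, E i j <-> F i j) -> ideal_eq (monomial_ideal E) (monomial_ideal F).
Proof. by move=> EF; apply: ideal_gen_ext => p; split=> -[i [j [/EF Eij ->]]]; exists i, j. Qed.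

Lemma monomial_ideal_mul (E F : nat -> nat -> Prop) :
  ideal_eq (ideal_mul (monomial_ideal E) (monomial_ideal F))
    (monomial_ideal (exp_sum E F)).
Proof.
apply: ideal_eq_trans (ideal_mul_gen _ _) _; apply: ideal_gen_ext => p; split.
  move=> [_ [_ [[i1 [j1 [E1 ->]]] [[i2 [j2 [F2 ->]]] ->]]]].
  by exists (i1 + i2)%N, (j1 + j2)%N; rewrite monM; split=> //; exists i1, j1, i2, j2.
move=> [_ [_ [[i1 [j1 [i2 [j2 [E1 F2 -> ->]]]]] ->]]].
by exists (mon i1 j1), (mon i2 j2); rewrite monM; split; [exists i1, j1|split=> //; exists i2, j2].
Qed.

Lemma monomial_ideal_dvd (E : nat -> nat -> Prop) i j i' j' :
  E i j -> (i <= i')%N -> (j <= j')%N -> monomial_ideal E (mon i' j').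
Proof.
move=> Eij le_ii' le_jj'; have [_ _ JM] := ideal_gen_is_ideal
  (fun p => exists i j, E i j /\ p = mon i j).
by rewrite -(subnK le_ii') -(subnK le_jj') -monM; apply/JM/mem_ideal_gen; exists i, j.
Qed.

Lemma monomial_ideal_eq_dominated (E F : nat -> nat -> Prop) :
  (forall i j, F i j -> E i j) ->
  (forall i j, E i j -> exists i' j', [/\ F i' j', (i' <= i)%N & (j' <= j)%N]) ->
  ideal_eq (monomial_ideal E) (monomial_ideal F).
Proof.
move=> FE Edom; apply: ideal_gen_eq => _ [i [j [Eij ->]]].
  by have [i' [j' [Fij' le_i'i le_j'j]]] := Edom _ _ Eij; apply: monomial_ideal_dvd Fij' _ _.
by apply: mem_ideal_gen; exists i, j; split=> //; apply: FE.
Qed.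

Local Notation b := (@bideal K N).
Local Notation bprod := (@bprod K N).
Local Notation ICn := (@ICn K N).

Lemma bideal_monomial k : ideal_eq (b k) (monomial_ideal (splits [:: k])).
Proof.
apply: ideal_gen_ext => p; split=> [[]->|[i [j [/splits1[][-> ->] ->]]]].
- by exists k, 0%N; rewrite /mon expr0 mulr1; split=> //; apply/splits1; left.
- by exists 0%N, k; rewrite /mon expr0 mul1r; split=> //; apply/splits1; right.
- by left; rewrite /mon expr0 mulr1.
- by right; rewrite /mon expr0 mul1r.
Qed.

Lemma prod_bideal l : ideal_eq (ideal_prod (map b l)) (monomial_ideal (splits l)).
Proof.
elim: l => [|k l IHl] /=.
  apply: ideal_gen_ext => p; split=> [->|[i [j [/splits_nil[-> ->] ->]]]].
    by exists 0%N, 0%N; rewrite /mon !expr0 mulr1; split=> //; apply/splits_nil.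
  by rewrite /mon !expr0 mulr1.
apply: ideal_eq_trans (ideal_mul_eq (bideal_monomial k) IHl) _.
apply: ideal_eq_trans (monomial_ideal_mul _ _) _.
by apply: monomial_ideal_ext => i j; rewrite -(splits_cat [:: k]).
Qed.

Lemma prod_bideal_cat l1 l2 :
  ideal_eq (ideal_prod (map b (l1 ++ l2)))
    (ideal_mul (ideal_prod (map b l1)) (ideal_prod (map b l2))).
Proof.
apply: ideal_eq_trans (prod_bideal _) _.
apply: ideal_eq_trans _ (ideal_eq_sym (ideal_mul_eq (prod_bideal l1) (prod_bideal l2))).
apply: ideal_eq_trans _ (ideal_eq_sym (monomial_ideal_mul _ _)).
by apply: monomial_ideal_ext => i j; rewrite splits_cat.
Qed.

Lemma bideal_mul_tilde k1 k2 k3 l : (k1 + 2 * k2 <= k3)%N ->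
  ideal_eq
    (ideal_mul (b k2) (ideal_gen (fun p =>
       ideal_prod (map b [:: k1, k3 & l]) p \/ p = mon (k3 + sumn l - k2) (k3 - k2))))
    (ideal_prod (map b [:: k1, k2, k3 & l])).
Proof.
move=> k3_big; set E := splits [:: k1, k3 & l].
pose E' i j := E i j \/ (i = k3 + sumn l - k2 /\ j = k3 - k2)%N.
have tilde_mon : ideal_eq (ideal_gen (fun p =>
    ideal_prod (map b [:: k1, k3 & l]) p \/ p = mon (k3 + sumn l - k2) (k3 - k2)))
    (monomial_ideal E').
  apply: ideal_eq_trans (ideal_genUl _ (prod_bideal _)) _.
  apply: ideal_gen_ext => p; split=> [[[i [j [Eij ->]]]|->]|[i [j [[Eij|[-> ->]] ->]]]].
  - by exists i, j; split=> //; left.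
  - by exists (k3 + sumn l - k2)%N, (k3 - k2)%N; split=> //; right.
  - by left; exists i, j.
  - by right.
apply: ideal_eq_trans (ideal_mul_eq (bideal_monomial k2) tilde_mon) _.
apply: ideal_eq_trans (monomial_ideal_mul _ _) _.
apply: ideal_eq_trans _ (ideal_eq_sym (prod_bideal _)).
apply: monomial_ideal_eq_dominated => i j.
  move/splits_swap/(splits_cat [:: k2]) => [i1 [j1 [i2 [j2 [S1 S2 -> ->]]]]].
  by exists i1, j1, i2, j2; split=> //; left.
move=> [i1 [j1 [i2 [j2 [S1 [S2|[-> ->]] -> ->]]]]].
  exists (i1 + i2)%N, (j1 + j2)%N; split=> //.
  apply: splits_swap; apply/(splits_cat [:: k2]).
  by exists i1, j1, i2, j2; split=> //; apply/splits1.
case/splits1: S1 => -[-> ->].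
  exists (k3 + sumn l)%N, (k1 + (k2 + 0))%N; split; try lia.
  exact/splits_consY/splits_consY/splits_consX/splits_sumnX.
exists (k1 + (k2 + sumn l))%N, (k3 + 0)%N; split; try lia.
exact/splits_consX/splits_consX/splits_consY/splits_sumnX.
Qed.

Lemma index_iota_cons m n : (m < n)%N -> index_iota m n = m :: index_iota m.+1 n.
Proof. by move=> lt_mn; rewrite /index_iota -(subnSK lt_mn). Qed.

Lemma bprodE a x y : bprod a x y = ideal_prod (map b (map a (index_iota x y.+1))).
Proof. by rewrite /bprod -map_comp. Qed.

Lemma bprod_cat a x y z : (x <= y.+1 <= z.+1)%N ->
  ideal_eq (bprod a x z) (ideal_mul (bprod a x y) (bprod a y.+1 z)).
Proof.
move=> /andP[le_xy le_yz]; rewrite !bprodE.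
have -> : index_iota x z.+1 = index_iota x y.+1 ++ index_iota y.+1 z.+1.
  by rewrite /index_iota -{2}(subnKC le_xy) -iotaD; congr iota; lia.
by rewrite map_cat; apply: prod_bideal_cat.
Qed.

Lemma ICn_bprod a n : ideal_eq (ICn a n) (bprod a 1 n.+1).
Proof.
rewrite bprodE; have -> : map a (index_iota 1 n.+2) = mkseq (fun k => a k.+1) n.+1.
  by rewrite /index_iota subn1 -add1n iotaDl -map_comp.
have asumE : asum a 1 n.+1 = (\sum_(k < n.+1) a k.+1)%N.
  by rewrite /asum big_add1 big_mkord.
apply: ideal_eq_trans _ (ideal_eq_sym (prod_bideal _)).
apply: ideal_gen_ext => p; rewrite asumE; split.
  move=> [c [[I ->] ->]]; exists (\sum_(k < n.+1) a k.+1 - \sum_(k in I) a k.+1)%N.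
  by exists (\sum_(k in I) a k.+1)%N; split=> //; apply/splits_mkseqP; exists I.
move=> [i [j [/splits_mkseqP[I -> ->] ->]]].
by exists (\sum_(k in I) a k.+1)%N; split=> //; exists I.
Qed.

End Ideals.

Theorem proposition4p6 (K : fieldType) (N : nat) (n : nat) (a : nat -> nat) (r : nat) :
  (3 <= n)%N ->
  (forall i, (1 <= i <= n.+1)%N -> (0 < a i)%N) ->
  (* (C1) *) a n.+1 = (asum a 1 n.-1 + 2 * a n)%N ->
  (* (C2) *) (forall i, (1 <= i <= n.-1)%N -> (a i.+1 > 2 * asum a 1 i)%N) ->
  (3 <= r <= n)%N ->
  ideal_eq (ideal_mul (@bideal K N (a 2)) (@btilde K N a r)) (@bprod K N a 1 r) /\
  ideal_eq (@ICn K N a n)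
    (ideal_mul (ideal_mul (@bideal K N (a 2)) (@btilde K N a r)) (@bprod K N a r.+1 n.+1)).
Proof.
move=> _ _ _ C2 /andP[le3r le_rn].
have a3_big : (a 1 + 2 * a 2 <= a 3)%N.
  have := C2 2%N; rewrite /asum /index_iota /= !big_cons big_nil; lia.
have idx3 : index_iota 3 r.+1 = 3%N :: index_iota 4 r.+1 by rewrite index_iota_cons.
have idx1 : index_iota 1 r.+1 = [:: 1, 2 & index_iota 3 r.+1]%N.
  by rewrite (@index_iota_cons 1) ?(@index_iota_cons 2) //; lia.
have asum3 : asum a 3 r = (a 3 + sumn (map a (index_iota 4 r.+1)))%N.
  by rewrite /asum idx3 big_cons sumnE big_map.
have part1 : ideal_eq (ideal_mul (@bideal K N (a 2)) (@btilde K N a r)) (@bprod K N a 1 r).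
  rewrite /btilde asum3 !bprodE idx1 idx3.
  exact: bideal_mul_tilde.
split=> //; apply: ideal_eq_trans (ICn_bprod _ _) _.
have le_1rn : (1 <= r.+1 <= n.+2)%N by lia.
apply: ideal_eq_trans (bprod_cat a le_1rn) _.
exact: ideal_mul_eq (ideal_eq_sym part1) (fun=> iff_refl _).
Qed.
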